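(* Let $\mathcal{G}$ be a connected $k$-uniform hypergraph with $n$ vertices. Then for every $j\in V(\mathcal{G})$, \[ {\rm ecc}(j)\geq \frac{k}{2(k-1)(n-1)\alpha_j(\mathcal{G})}. \]
   Context: A $k$-uniform hypergraph $\mathcal{G}$ has vertex set $V(\mathcal{G})=[n]$ and edge set $E(\mathcal{G})$ of $k$-element subsets of $V(\mathcal{G})$. A path of length $l$ is an alternating sequence $v_0e_1v_1\cdots e_lv_l$ of distinct vertices and distinct edges with $v_{i-1},v_i\in e_i$; $\mathcal{G}$ is connected if any two vertices are joined by a path. The distance $d(u,v)$ is the length of a shortest path between $u$ and $v$, and ${\rm ecc}(v)=\max_{u\in V(\mathcal{G})}d(u,v)$. For $\mathbf{x}\in\mathbb{R}^n$, $\mathcal{L}_\mathcal{G}\mathbf{x}^k=\sum_{\{i_1,\ldots,i_k\}\in E(\mathcal{G})}\left(x_{i_1}^k+\cdots+x_{i_k}^k-k\,x_{i_1}\cdots x_{i_k}\right)$, and the inverse Perron value of vertex $j$ is $\alpha_j(\mathcal{G})=\min\{\mathcal{L}_\mathcal{G}\mathbf{x}^k : \mathbf{x}\in\mathbb{R}^n_+,\ \sum_{i=1}^n x_i^k=1,\ x_j=0\}$. *)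

From HB Require Import structures.
From mathcomp Require Import all_boot all_order all_algebra.
From mathcomp Require Import boolp classical_sets reals.
Set Implicit Arguments. Unset Strict Implicit. Unset Printing Implicit Defensive.
Import Order.TTheory GRing.Theory Num.Theory.
Local Open Scope classical_set_scope.
Local Open Scope ring_scope.

Definition k_uniform (n k : nat) (E : {set {set 'I_n}}) : Prop :=
  forall e, e \in E -> #|e| = k.

(* A path of length l = size es from u to v: an alternating sequence
   v_0 e_1 v_1 ... e_l v_l (vs = [v_0;...;v_l], es = [e_1;...;e_l]) of
   distinct vertices and distinct edges of E with v_{i-1}, v_i \in e_i.
   (The default x0 of nth is irrelevant since all indices are in range.) *)
Definition is_hpath (n : nat) (E : {set {set 'I_n}})
    (vs : seq 'I_n) (es : seq {set 'I_n}) : Prop :=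
  [/\ size vs = (size es).+1, uniq vs, uniq es,
      all (fun e => e \in E) es &
      forall (x0 : 'I_n) (i : nat), (i < size es)%N ->
        (nth x0 vs i \in nth finset.set0 es i) /\ (nth x0 vs i.+1 \in nth finset.set0 es i)].

Definition has_path_len (n : nat) (E : {set {set 'I_n}}) (u v : 'I_n) (l : nat)
  : Prop :=
  exists vs es, [/\ is_hpath E vs es, size es = l,
                    head u vs = u & last u vs = v].

Definition hconnected (n : nat) (E : {set {set 'I_n}}) : Prop :=
  forall u v : 'I_n, exists l, has_path_len E u v l.

(* d(u,v): the length of a shortest path between u and v (0 if none exists,
   which never happens for connected hypergraphs). *)
Definition hdist (n : nat) (E : {set {set 'I_n}}) (u v : 'I_n) : nat :=
  match pselect (exists l, `[< has_path_len E u v l >]) with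
  | left H => ex_minn H
  | right _ => 0%N
  end.

Definition ecc (n : nat) (E : {set {set 'I_n}}) (v : 'I_n) : nat :=
  \max_(u : 'I_n) hdist E u v.

Definition lapform {R : realType} (n k : nat) (E : {set {set 'I_n}})
    (x : 'I_n -> R) : R :=
  \sum_(e in E) (\sum_(i in e) x i ^+ k - k%:R * \prod_(i in e) x i).

(* alpha_j(G) = min { L_G x^k : x in R^n_+, sum x_i^k = 1, x_j = 0 };
   the minimum is attained (compact feasible set), so it equals the infimum. *)
Definition alpha {R : realType} (n k : nat) (E : {set {set 'I_n}}) (j : 'I_n)
  : R :=
  inf [set lapform k E x | x in
        [set x : 'I_n -> R | (forall i, 0 <= x i) /\
                             \sum_i x i ^+ k = 1 /\ x j = 0]].

From HB Require Import structures.
From mathcomp Require Import all_boot all_order all_algebra.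
From mathcomp Require Import boolp classical_sets reals.
From mathcomp Require Import ring lra.
Import Order.TTheory GRing.Theory Num.Theory.
Local Open Scope ring_scope.
Set Implicit Arguments. Unset Strict Implicit.

(* Write y_i for x_i^(k/2).  For an edge e containing a and b, replacing x_a
   and x_b by their geometric mean leaves the product over e unchanged and
   lowers the sum of k-th powers over e by exactly (y_a - y_b)^2, so AM-GM
   bounds (y_a - y_b)^2 by the contribution of e to L_G x^k.  When x_j = 0,
   telescoping along a shortest path from i to j, Cauchy-Schwarz and the
   distinctness of its edges give x_i^k <= d(i, j) L_G x^k.  Summing over the
   n - 1 vertices i <> j yields alpha_j >= 1 / ((n - 1) ecc(j)), which is
   stronger than the claim because k <= 2 (k - 1). *)

Section SumInequalities.
Variable R : realDomainType.

Lemma sqr_sum_le_card_sum_sqr (T : finType) (F : T -> R) :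
  (\sum_i F i) ^+ 2 <= #|T|%:R * \sum_i F i ^+ 2.
Proof.
set S := \sum_i F i; set Q := \sum_i F i ^+ 2; set d : R := #|T|%:R.
have [T0|T_gt0] := posnP #|T|.
  have -> : S = 0 by rewrite /S big_pred0 // => i; apply: (card0_eq T0).
  by rewrite expr0n mulr_ge0 ?ler0n ?sumr_ge0 // => i _; apply: sqr_ge0.
have variance : \sum_i (F i * d - S) ^+ 2 = d * (d * Q - S ^+ 2).
  under eq_bigr do rewrite sqrrB exprMn.
  rewrite big_split sumrB /= sumrMnl -!mulr_suml sumr_const -/S -/Q.
  rewrite -[_ *+ #|_|]mulr_natr -/d; ring.
rewrite -subr_ge0 -(pmulr_rge0 _ (_ : 0 < d)) ?ltr0n // -variance.
by apply: sumr_ge0 => i _; apply: sqr_ge0.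
Qed.

Lemma sum_uniq_le_sum (T : finType) (A : {pred T}) (s : seq T) (F : T -> R) :
  uniq s -> {subset s <= A} -> {in A, forall i, 0 <= F i} ->
  \sum_(i <- s) F i <= \sum_(i in A) F i.
Proof.
move=> s_uniq sA F_ge0; rewrite big_uniq // (bigID (mem s) A) /=.
have -> : \sum_(i in A | i \in s) F i = \sum_(i in s) F i.
  by apply: eq_bigl => i; rewrite andbC; case: (boolP (i \in s)) => // /sA ->.
by rewrite lerDl sumr_ge0 // => i /andP[/F_ge0].
Qed.

End SumInequalities.

Lemma AGM_sum_pow (R : numFieldType) (T : finType) (A : {pred T}) (z : T -> R) :
  {in A, forall i, 0 <= z i} ->
  #|A|%:R * \prod_(i in A) z i <= \sum_(i in A) z i ^+ #|A|.
Proof.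
move=> z_ge0; set k := #|A|.
have [k0|k_gt0] := posnP k; first by rewrite k0 mul0r sumr_ge0 // => i /z_ge0; rewrite exprn_ge0.
have sum_ge0 : 0 <= \sum_(i in A) z i ^+ k by rewrite sumr_ge0 // => i /z_ge0/exprn_ge0.
have [+ _] := leif_AGM (fun i Ai => exprn_ge0 k (z_ge0 i Ai)).
rewrite -/k prodrXl ler_pXn2r ?nnegrE ?prodr_ge0 ?divr_ge0 //.
by rewrite ler_pdivlMr ?ltr0n // mulrC.
Qed.

Definition lapform_edge (R : numDomainType) (T : finType) (k : nat)
    (x : T -> R) (e : {set T}) : R :=
  \sum_(i in e) x i ^+ k - k%:R * \prod_(i in e) x i.

Section EdgeTerm.
Variables (R : rcfType) (T : finType) (k : nat) (x : T -> R) (e : {set T}).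
Hypotheses (x_ge0 : forall i, 0 <= x i) (card_e : #|e| = k).

Lemma lapform_edge_ge0 : 0 <= lapform_edge k x e.
Proof. by rewrite subr_ge0 -card_e AGM_sum_pow. Qed.

Lemma sqr_sqrt_exp_sub_le_lapform_edge a b : a \in e -> b \in e ->
  (Num.sqrt (x a) ^+ k - Num.sqrt (x b) ^+ k) ^+ 2 <= lapform_edge k x e.
Proof.
move=> ae be; have [<-|ab] := eqVneq a b; first by rewrite subrr expr0n lapform_edge_ge0.
pose s := Num.sqrt (x a * x b).
pose z i := if (i == a) || (i == b) then s else x i.
have z_ge0 i : 0 <= z i by rewrite /z; case: ifP; rewrite ?sqrtr_ge0.
have big_ab idx (op : Monoid.com_law idx) F : \big[op/idx]_(i in e) F i =
    op (F a) (op (F b) (\big[op/idx]_(i in e :\ a :\ b) F i)).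
  by rewrite (big_setD1 a) // (big_setD1 b) // !inE eq_sym ab.
have z_out i : i \in e :\ a :\ b -> z i = x i.
  by rewrite !inE /z => /and3P[/negbTE-> /negbTE-> _].
have := AGM_sum_pow (A := e) (fun i _ => z_ge0 i).
rewrite card_e !big_ab.
have -> : \sum_(i in e :\ a :\ b) z i ^+ k = \sum_(i in e :\ a :\ b) x i ^+ k.
  by apply: eq_bigr => i /z_out ->.
rewrite /lapform_edge !big_ab (eq_bigr _ z_out) /z eqxx /= eqxx orbT.
set ya := Num.sqrt (x a) ^+ k; set yb := Num.sqrt (x b) ^+ k.
have ss : s * s = x a * x b by rewrite -expr2 sqr_sqrtr ?mulr_ge0.
have sk : s ^+ k = ya * yb by rewrite /s sqrtrM // exprMn.
have ya2 : x a ^+ k = ya ^+ 2 by rewrite /ya exprAC sqr_sqrtr.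
have yb2 : x b ^+ k = yb ^+ 2 by rewrite /yb exprAC sqr_sqrtr.
rewrite sk ya2 yb2 [s * (s * _)]mulrA ss -mulrA.
lra.
Qed.

End EdgeTerm.

Lemma has_path_len_hdist n (E : {set {set 'I_n}}) u v :
  hconnected E -> has_path_len E u v (hdist E u v).
Proof.
move=> E_conn; rewrite /hdist; case: pselect => [ex_path|no_path].
  by case: ex_minnP => l /asboolP.
by have [l uv_l] := E_conn u v; case: no_path; exists l; apply/asboolP.
Qed.

Section Hypergraph.
Variables (R : realType) (n k : nat) (E : {set {set 'I_n}}).
Hypothesis E_uniform : k_uniform k E.

Lemma lapformE (x : 'I_n -> R) : lapform k E x = \sum_(e in E) lapform_edge k x e.
Proof. by []. Qed.

Lemma lapform_ge0 (x : 'I_n -> R) : (forall i, 0 <= x i) -> 0 <= lapform k E x.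
Proof.
by move=> x_ge0; rewrite lapformE sumr_ge0 // => e /E_uniform; apply: lapform_edge_ge0.
Qed.

Lemma sqr_sqrt_exp_sub_le_path_lapform (x : 'I_n -> R) u v l :
  (forall i, 0 <= x i) -> has_path_len E u v l ->
  (Num.sqrt (x v) ^+ k - Num.sqrt (x u) ^+ k) ^+ 2 <= l%:R * lapform k E x.
Proof.
move=> x_ge0 [vs [es [[size_vs _ es_uniq es_E es_adj] <- head_vs last_vs]]].
pose y i := Num.sqrt (x (nth u vs i)) ^+ k.
have -> : Num.sqrt (x v) ^+ k - Num.sqrt (x u) ^+ k = \sum_(i < size es) (y i.+1 - y i).
  rewrite -(big_mkord xpredT (fun i => y i.+1 - y i)) telescope_sumr // /y nth0 head_vs.
  by rewrite -[X in nth _ _ X]/((size es).+1.-1) -size_vs nth_last last_vs.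
apply: le_trans (sqr_sum_le_card_sum_sqr _) _; rewrite card_ord ler_wpM2l //.
apply: (@le_trans _ _ (\sum_(i < size es) lapform_edge k x (nth finset.set0 es i))).
  apply: ler_sum => i _; have [in_i in_Si] := es_adj u i (ltn_ord i).
  have e_in : nth finset.set0 es i \in E by apply: (allP es_E); rewrite mem_nth.
  exact: sqr_sqrt_exp_sub_le_lapform_edge x_ge0 (E_uniform e_in) _ _ in_Si in_i.
have -> : \sum_(i < size es) lapform_edge k x (nth finset.set0 es i) =
          \sum_(e <- es) lapform_edge k x e by rewrite (big_nth finset.set0) big_mkord.
rewrite lapformE; apply: sum_uniq_le_sum => // [e /(allP es_E) //|e /E_uniform].
exact: lapform_edge_ge0.
Qed.

Hypotheses (k_gt0 : (0 < k)%N) (E_conn : hconnected E).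

Lemma one_le_ecc_lapform (j : 'I_n) (x : 'I_n -> R) :
  (forall i, 0 <= x i) -> \sum_i x i ^+ k = 1 -> x j = 0 ->
  1 <= (n.-1)%:R * (ecc E j)%:R * lapform k E x.
Proof.
move=> x_ge0 x_normed xj0.
have vertex_bound i : x i ^+ k <= (ecc E j)%:R * lapform k E x.
  have := sqr_sqrt_exp_sub_le_path_lapform x_ge0 (has_path_len_hdist i j E_conn).
  rewrite xj0 sqrtr0 expr0n (gtn_eqF k_gt0) sub0r sqrrN exprAC sqr_sqrtr // => /le_trans; apply.
  by rewrite ler_wpM2r ?lapform_ge0 // ler_nat (leq_bigmax i).
rewrite -[X in X <= _]x_normed (bigD1 j) //= xj0 expr0n (gtn_eqF k_gt0) add0r -mulrA.
apply: le_trans (ler_sum _ (fun i _ => vertex_bound i)) _.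
by rewrite sumr_const cardC1 card_ord [leRHS]mulr_natl.
Qed.

Lemma one_le_ecc_alpha (j : 'I_n) : (1 < n)%N ->
  1 <= (n.-1)%:R * (ecc E j)%:R * alpha (R:=R) k E j.
Proof.
move=> n_gt1; set c := (n.-1)%:R * (ecc E j)%:R.
have /card_gt0P[i0 /negbTE i0j] : (0 < #|predC1 j|)%N.
  by rewrite cardC1 card_ord -ltnS prednK // ltnW.
pose x0 i : R := (i == i0)%:R.
have x0_ge0 i : 0 <= x0 i by apply: ler0n.
have x0_normed : \sum_i x0 i ^+ k = 1.
  rewrite (bigD1 i0) //= big1 => [|i /negbTE i_ne]; first by rewrite /x0 eqxx expr1n addr0.
  by rewrite /x0 i_ne expr0n (gtn_eqF k_gt0).
have x0j0 : x0 j = 0 by rewrite /x0 eq_sym i0j.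
have c_gt0 : 0 < c.
  have := one_le_ecc_lapform x0_ge0 x0_normed x0j0; rewrite -/c lt_def mulr_ge0 ?andbT //.
  by apply: contraTneq => ->; rewrite mul0r ler10.
rewrite -ler_pdivrMl // mulr1.
apply: lb_le_inf; first by exists (lapform k E x0), x0.
move=> _ [x [x_ge0 [x_normed xj0]] <-].
by rewrite -[c^-1]mulr1 ler_pdivrMl //; apply: one_le_ecc_lapform.
Qed.

End Hypergraph.

Theorem theorem3p4 (R : realType) (n k : nat) (E : {set {set 'I_n}}) :
  (2 <= k)%N -> k_uniform k E -> hconnected E ->
  forall j : 'I_n,
    k%:R / (2 * (k.-1)%:R * (n.-1)%:R * alpha (R:=R) k E j) <= (ecc E j)%:R :> R.
Proof.
move=> k_ge2 E_uniform E_conn j; have k_gt0 : (0 < k)%N by apply: ltnW.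
have [n_le1|n_gt1] := leqP n 1.
  have -> : n.-1 = 0%N by case: (n) n_le1 => [|[]].
  by rewrite mulr0 mul0r invr0 mulr0.
have := one_le_ecc_alpha R E_uniform k_gt0 E_conn j n_gt1.
set N := (n.-1)%:R; set M := (ecc E j)%:R; set A := alpha _ _ _ => one_le_NMA.
have NM_ge0 : 0 <= N * M by rewrite mulr_ge0 ?ler0n.
have A_gt0 : 0 < A by nra.
have K_ge1 : 1 <= (k.-1)%:R :> R by rewrite ler1n -ltnS prednK.
have -> : k%:R = (k.-1)%:R + 1 :> R by rewrite natr1 prednK.
have N_gt0 : 0 < N by rewrite ltr0n -ltnS prednK // ltnW.
rewrite ler_pdivrMr; first nra.
by rewrite !mulr_gt0 // (lt_le_trans ltr01 K_ge1).
Qed.
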